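(* Let $k<m\le kn$ be positive integers and $I$ a single-category instance with $n$ agents, $m$ goods and cardinality constraint $k$. Let $\mathcal{A}^*=(A^*_1,\dots,A^*_n)$ be a utilitarian-optimal allocation and $R=\{i:|A^*_i|<k\}$, $T=\{i:|A^*_i|=k\}$. If $\sum_{i\in R\cup T}u_i(A^*_i)<1$, then $$\frac{\text{OPT-USW}(I)}{\max_{\mathcal{A}\in \mathcal{C}_k(I)}\text{USW}(\mathcal{A})}\le \frac{1+s}{1+\frac{ks^2}{m-1}},\qquad s=-1+\sqrt{1+\frac{m-1}{k}}.$$
   Context: Each agent $i$ has an additive utility function $u_i:2^M\to\mathbb{R}_{\ge 0}$ with $u_i(\emptyset)=0$ and $u_i(M)=1$. An allocation is a partition $(A_1,\dots,A_n)$ of $M$; it is cardinal if $|A_i|\le k$ for all $i$, and $\mathcal{C}_k(I)$ denotes the set of cardinal allocations. $\text{USW}(\mathcal{A})=\sum_i u_i(A_i)$; $\text{OPT-USW}(I)$ is the maximum of $\text{USW}$ over all allocations, attained by a utilitarian-optimal allocation. *)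

From mathcomp Require Import all_boot all_order all_algebra.
Set Implicit Arguments. Unset Strict Implicit. Unset Printing Implicit Defensive.
Import Order.TTheory GRing.Theory Num.Theory.
Local Open Scope ring_scope.

(* Agents are 'I_n, goods are 'I_m.  An allocation (a partition of M into
   n bundles A_1..A_n) is a map assigning each good to an agent:
   A_i = [set g | a g == i]. *)
Definition alloc (n m : nat) := {ffun 'I_m -> 'I_n}.

Definition bundle n m (a : alloc n m) (i : 'I_n) : {set 'I_m} :=
  [set g | a g == i].

Definition util (R : numDomainType) n m (u : 'I_n -> 'I_m -> R)
  (i : 'I_n) (S : {set 'I_m}) : R := \sum_(g in S) u i g.

Definition USW (R : numDomainType) n m (u : 'I_n -> 'I_m -> R) (a : alloc n m) : R :=
  \sum_(i : 'I_n) util u i (bundle a i).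

Definition cardinal n m (k : nat) (a : alloc n m) : bool :=
  [forall i : 'I_n, #|bundle a i| <= k]%N.

(* utilities are nonnegative; the max over (finitely many) allocations is
   taken with neutral element 0, which is harmless since USW >= 0 *)
Definition OPT_USW (R : realDomainType) n m (u : 'I_n -> 'I_m -> R) : R :=
  \big[Num.max/0]_(a : alloc n m) USW u a.

Definition max_cardinal_USW (R : realDomainType) n m k (u : 'I_n -> 'I_m -> R) : R :=
  \big[Num.max/0]_(a : alloc n m | cardinal k a) USW u a.

(* Call an agent heavy if it holds more than k goods in the optimal allocation A*,
   and let w g be the value of g to its owner in A*.  Since m <= k n, the light
   agents have at least as many free places as the heavy agents have goods in
   excess of k.  Let nu g be the average, over the free places, of the utility of g
   to the owner of the place.  Each heavy agent keeps the k goods of its bundle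
   with the largest w g - nu g and sends the others to free places; averaging over
   all cyclic shifts of that assignment, some cardinal allocation is worth at least
   \sum_g nu g + \sum_{g kept} (w g - nu g), where \sum_g nu g = 1.  Comparing this
   with OPT = \sum_g w g agent by agent through AM-GM, OPT is at most b times it,
   where b = (1 + s) / (1 + k s^2 / (m - 1)) is the root >= 1 of
   4 k b (b - 1) = m - 1. *)

From mathcomp Require Import all_boot all_order all_algebra.
From mathcomp Require Import ring lra zify.
Import Order.TTheory GRing.Theory Num.Theory.
Set Implicit Arguments. Unset Strict Implicit. Unset Printing Implicit Defensive.
Local Open Scope ring_scope.

Lemma big_bundles_cond (V : Type) (idx : V) (op : Monoid.com_law idx) n m
    (a : alloc n m) (P : 'I_n -> 'I_m -> bool) (G : 'I_n -> 'I_m -> V) :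
  \big[op/idx]_i \big[op/idx]_(g in bundle a i | P i g) G i g
  = \big[op/idx]_(g | P (a g) g) G (a g) g.
Proof.
under eq_bigr do rewrite big_mkcond.
rewrite exchange_big [RHS]big_mkcond; apply: eq_bigr => g _.
rewrite (bigD1 (a g)) //= inE eqxx big1 ?Monoid.mulm1 // => i /negbTE ne.
by rewrite inE eq_sym ne.
Qed.

Lemma big_bundles (V : Type) (idx : V) (op : Monoid.com_law idx) n m
    (a : alloc n m) (G : 'I_n -> 'I_m -> V) :
  \big[op/idx]_i \big[op/idx]_(g in bundle a i) G i g = \big[op/idx]_g G (a g) g.
Proof.
rewrite -(big_bundles_cond _ a (fun _ _ => true)); apply: eq_bigr => i _.
by apply: eq_bigl => g; rewrite andbT.
Qed.

Lemma USW_goods (R : numDomainType) n m (u : 'I_n -> 'I_m -> R) (a : alloc n m) :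
  USW u a = \sum_g u (a g) g.
Proof. exact: big_bundles. Qed.

Lemma util_setT (R : numDomainType) n m (u : 'I_n -> 'I_m -> R) i :
  util u i [set: 'I_m] = \sum_g u i g.
Proof. by apply: eq_bigl => g; rewrite in_setT. Qed.

Lemma sum_card_bundles n m (a : alloc n m) : (\sum_i #|bundle a i| = m)%N.
Proof.
rewrite -[m in RHS]card_ord -sum1_card -(big_bundles _ a (fun _ _ => 1%N)).
by apply: eq_bigr => i _; rewrite sum1_card.
Qed.

Lemma util_le1 (R : numDomainType) n m (u : 'I_n -> 'I_m -> R) i (B : {set 'I_m}) :
  (forall g, 0 <= u i g) -> util u i [set: 'I_m] = 1 -> util u i B <= 1.
Proof.
move=> u_ge0 <-; rewrite util_setT [X in _ <= X](bigID (mem B)) /=.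
by rewrite lerDl sumr_ge0.
Qed.

Lemma USW_le_OPT (R : realDomainType) n m (u : 'I_n -> 'I_m -> R) (a : alloc n m) :
  USW u a <= OPT_USW u.
Proof. exact: (le_bigmax _ (fun a => USW u a) a). Qed.

Lemma USW_le_max_cardinal (R : realDomainType) n m k (u : 'I_n -> 'I_m -> R)
    (a : alloc n m) :
  cardinal k a -> USW u a <= max_cardinal_USW k u.
Proof. by move=> ka; apply: (le_bigmax_cond _ (fun a => USW u a) ka). Qed.

Lemma le_owner_utility (R : realDomainType) n m (u : 'I_n -> 'I_m -> R) (a : alloc n m) :
  USW u a = OPT_USW u -> forall i g, u i g <= u (a g) g.
Proof.
move=> a_opt i g.
pose a' : alloc n m := [ffun g' => if g' == g then i else a g'].
have := USW_le_OPT u a'; rewrite -a_opt !USW_goods.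
rewrite (bigD1 g) // [in X in _ <= X](bigD1 g) //= ffunE eqxx.
rewrite (eq_bigr (fun g' => u (a g') g')) ?lerD2r // => g' /negbTE ne.
by rewrite ffunE ne.
Qed.

Lemma sum_excess_le_sum_deficit (I : finType) (f : I -> nat) k :
  (\sum_i f i <= k * #|I|)%N -> (\sum_i (f i - k) <= \sum_i (k - f i))%N.
Proof.
move=> f_le.
have : (\sum_i (f i - k) + \sum_(i : I) k = \sum_i (k - f i) + \sum_i f i)%N.
  by rewrite -!big_split; apply: eq_bigr => i _ /=; lia.
have -> : (\sum_(i : I) k = k * #|I|)%N by rewrite sum_nat_const mulnC.
lia.
Qed.

Lemma exists_top_subset (R : realDomainType) (T : finType) (d : T -> R) k
    (B : {set T}) :
  (k <= #|B|)%N -> exists W : {set T},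
    [/\ W \subset B, #|W| = k & k%:R * \sum_(x in B) d x <= #|B|%:R * \sum_(x in W) d x].
Proof.
move=> /subnKC; move: (#|B| - k)%N => N; elim: N B => [|N IH] B cardB.
  by exists B; rewrite -cardB addn0.
have /set0Pn [x xB] : B != set0 by rewrite -card_gt0 -cardB addnS.
have [x0 x0B x0_min] := arg_minP d xB; have {}x0B : x0 \in B := x0B.
have [|W [WB cardW sumW]] := IH (B :\ x0).
  by apply/eqP; rewrite -eqSS -addnS cardB (cardsD1 x0) x0B.
exists W; split=> //; first exact: subset_trans WB (subD1set B x0).
have x0_le : k%:R * d x0 <= \sum_(x in W) d x.
  rewrite -cardW mulr_natl -sumr_const; apply: ler_sum => y yW.
  by apply: x0_min; move/subsetP: WB => /(_ y yW); rewrite inE => /andP[].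
rewrite (big_setD1 x0 x0B) (cardsD1 x0 B) x0B natrD mulrDr mulrDl mul1r.
exact: lerD.
Qed.

Lemma exists_map_with_fibres n (c : 'I_n -> nat) S :
  S = (\sum_i c i)%N -> exists f : 'I_S -> 'I_n, forall i, #|[set q | f q == i]| = c i.
Proof.
move=> ->; case: n c => [|n] c; first by rewrite big_ord0; exists id => -[].
pose E := flatten [seq nseq (c j) j | j <- enum 'I_n.+1].
have sizeE : size E = (\sum_i c i)%N.
  rewrite size_flatten /shape -map_comp sumnE big_map big_enum /=.
  by apply: eq_bigr => j _; rewrite size_nseq.
rewrite -sizeE; exists (nth ord0 E) => i.
rewrite -sum1_card -[RHS](_ : count_mem i E = c i).
  by rewrite -sum1_count (big_nth ord0) big_mkord; apply: eq_bigl => q; rewrite inE.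
rewrite count_flatten -map_comp sumnE big_map big_enum /=.
rewrite (bigD1 i) //= count_nseq /= eqxx mul1n big1 ?addn0 // => j /negbTE ji.
by rewrite count_nseq /= ji.
Qed.

Lemma cardinal_redistribute n m k S (a : alloc n m) (F : {set 'I_m})
    (slot : 'I_m -> 'I_S) (own : 'I_S -> 'I_n) :
  {in F &, injective slot} ->
  (forall i, #|bundle a i :\: F| + #|[set q | own q == i]| <= k)%N ->
  cardinal k [ffun g => if g \in F then own (slot g) else a g].
Proof.
move=> slot_inj cap; apply/forallP => i.
set moved := [set g in F | own (slot g) == i].
have sub : bundle [ffun g => if g \in F then own (slot g) else a g] i
           \subset (bundle a i :\: F) :|: moved.
  by apply/subsetP => g; rewrite !inE ffunE; case: (g \in F) => /=; rewrite ?orbF.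
have card_moved : (#|moved| <= #|[set q | own q == i]|)%N.
  have moved_inj : {in moved &, injective slot}.
    by apply: sub_in2 slot_inj => g; rewrite inE => /andP[].
  rewrite -(card_in_imset moved_inj); apply/subset_leq_card/subsetP => q /imsetP[g].
  by rewrite !inE => /andP[_ ?] ->.
apply: leq_trans (subset_leq_card sub) _; apply: leq_trans (leq_card_setU _ _) _.
by apply: leq_trans (cap i); rewrite leq_add2l.
Qed.

Lemma max_cardinal_ge_shift_average (R : realFieldType) n m k
    (u : 'I_n -> 'I_m -> R) (a : alloc n m) (F : {set 'I_m}) S (own : 'I_S.+1 -> 'I_n) :
  (#|F| <= S.+1)%N ->
  (forall i, #|bundle a i :\: F| + #|[set q | own q == i]| <= k)%N ->
  \sum_(g | g \notin F) u (a g) g + (\sum_(g in F) \sum_q u (own q) g) / S.+1%:R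
    <= max_cardinal_USW k u.
Proof.
move=> cardF cap.
(* Good [g] in [F] goes to place [r g + c]; summed over all shifts [c], it visits
   every place once. *)
pose r g : 'I_S.+1 := inord (index g (enum F)).
have r_inj : {in F &, injective r}.
  have index_lt g : g \in F -> (index g (enum F) < S.+1)%N.
    by move=> gF; rewrite (leq_trans _ cardF) // cardE index_mem mem_enum.
  move=> g1 g2 g1F g2F /(congr1 val); rewrite /= !inordK ?index_lt //.
  by apply: (index_inj g1); rewrite mem_enum.
pose b c : alloc n m := [ffun g => if g \in F then own (r g + c) else a g].
have USW_b c : USW u (b c)
    = \sum_(g | g \notin F) u (a g) g + \sum_(g in F) u (own (r g + c)) g.
  rewrite USW_goods (bigID (mem F)) addrC /=.
  by congr (_ + _); apply: eq_bigr => g gF; rewrite ffunE ?(negbTE gF) ?gF.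
have : \sum_(c < S.+1) USW u (b c) <= \sum_(c < S.+1) max_cardinal_USW k u.
  apply: ler_sum => c _; apply/USW_le_max_cardinal/(cardinal_redistribute _ cap).
  by move=> g1 g2 g1F g2F /addIr; apply: r_inj.
rewrite (eq_bigr _ (fun c _ => USW_b c)) big_split /= !sumr_const !card_ord exchange_big /=.
under [X in _ + X]eq_bigr => g _.
  rewrite -(reindex_inj (addrI (r g)) (P := xpredT) (F := fun q => u (own q) g)).
over.
by move=> avg; rewrite -(ler_pM2r (ltr0Sn R S)) mulrDl divfK ?pnatr_eq0 // !mulr_natr.
Qed.

Lemma divr_le_of_le_mul (R : realFieldType) (x y b : R) :
  0 <= x -> 0 <= b -> x <= b * y -> x / y <= b.
Proof.
move=> x_ge0 b_ge0 le_x; have [y_gt0 | y_le0] := ltrP 0 y.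
  by rewrite ler_pdivrMr.
(* when y <= 0, x = 0 and x / y = 0 *)
have -> : x = 0 by nra.
by rewrite mul0r.
Qed.

Lemma amgm_slack (R : realFieldType) (k a b D K : R) :
  0 <= k -> 0 < a -> 0 <= D -> k * D <= a * K ->
  (4 * b * k - a) * D <= 4 * b ^+ 2 * k * K.
Proof.
move=> k_ge0 a_gt0 D_ge0 kD_le; rewrite -(ler_pM2l a_gt0).
(* AM-GM: (4 b k - a) a <= (2 b k)^2 *)
have amgm : a * ((4 * b * k - a) * D) <= 4 * b ^+ 2 * k * (k * D).
  have -> : 4 * b ^+ 2 * k * (k * D)
            = a * ((4 * b * k - a) * D) + D * (2 * b * k - a) ^+ 2 by ring.
  by rewrite lerDl mulr_ge0 ?sqr_ge0.
have scaled : 4 * b ^+ 2 * k * (k * D) <= 4 * b ^+ 2 * k * (a * K).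
  by apply: ler_wpM2l; rewrite // mulr_ge0 // mulr_ge0 // sqr_ge0.
have -> : a * (4 * b ^+ 2 * k * K) = 4 * b ^+ 2 * k * (a * K) by ring.
exact: le_trans amgm scaled.
Qed.

Lemma ratio_bound_arith (R : realFieldType) (I : finType) (a N D K : I -> R)
    (k b M : R) :
  0 < k -> 0 < b -> M - 1 <= 4 * b * (b - 1) * k ->
  \sum_i N i = 1 -> \sum_i a i = M ->
  (forall i, a i * D i + N i <= a i) ->
  (forall i, (4 * b * k - a i) * D i <= 4 * b ^+ 2 * k * K i) ->
  \sum_i (N i + D i) <= b * \sum_i (N i + K i).
Proof.
move=> k_gt0 b_gt0 M_le sumN sumA budget slack.
have {}budget : \sum_i a i * D i + 1 <= M.
  by rewrite -sumN -sumA -big_split; apply: ler_sum => i _; apply: budget.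
have {}slack : 4 * b * k * \sum_i D i - \sum_i a i * D i <= 4 * b ^+ 2 * k * \sum_i K i.
  by rewrite !mulr_sumr -sumrB; apply: ler_sum => i _; rewrite -mulrBl.
have bk_gt0 : 0 < 4 * b * k by rewrite !mulr_gt0.
rewrite !big_split /= sumN -(ler_pM2l bk_gt0); nra.
Qed.

Lemma half_one_plus_sqrt (R : rcfType) (k M : R) : 0 < k -> 1 < M ->
  let b := (1 + Num.sqrt (1 + (M - 1) / k)) / 2 in
  [/\ 1 <= b, 4 * b * (b - 1) * k = M - 1
    & (1 + (-1 + Num.sqrt (1 + (M - 1) / k)))
        / (1 + k * (-1 + Num.sqrt (1 + (M - 1) / k)) ^+ 2 / (M - 1)) = b].
Proof.
move=> k_gt0 M_gt1; set B := Num.sqrt _ => b.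
have k_neq0 : k != 0 by rewrite gt_eqF.
have r_ge0 : 0 <= (M - 1) / k by rewrite divr_ge0 ?subr_ge0 ?ltW.
have B2 : B ^+ 2 = 1 + (M - 1) / k by rewrite sqr_sqrtr // addr_ge0.
have M1E : M - 1 = k * (B ^+ 2 - 1) by rewrite B2 addrAC subrr add0r mulrC divfK.
have B_ge0 : 0 <= B by rewrite sqrtr_ge0.
have B_gt1 : 1 < B.
  have : 0 < k * (B ^+ 2 - 1) by rewrite -M1E subr_gt0.
  by rewrite pmulr_rgt0 // subr_gt0 expr2; nra.
split; first by rewrite /b; lra.
  by rewrite M1E /b; field.
rewrite M1E /b; field.
by rewrite !gt_eqF //; nra.
Qed.

Section OptimalVsCardinal.
Variables (R : realFieldType) (n m k : nat) (u : 'I_n -> 'I_m -> R).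
Hypotheses (u_ge0 : forall i g, 0 <= u i g) (u_norm : forall i, util u i [set: 'I_m] = 1).
Hypotheses (k_gt0 : (0 < k)%N) (m_le_kn : (m <= k * n)%N).
Variable A : alloc n m.
Hypothesis A_opt : USW u A = OPT_USW u.
Variable b : R.
Hypotheses (b_ge1 : 1 <= b) (b_root : m%:R - 1 <= 4 * b * (b - 1) * k%:R).

Local Notation w g := (u (A g) g).
Local Notation a i := #|bundle A i|.

Lemma sum_excess_le_sum_slack : (\sum_i (a i - k) <= \sum_i (k - a i))%N.
Proof. by apply: sum_excess_le_sum_deficit; rewrite sum_card_bundles card_ord. Qed.

Section Redistribution.
(* [own q] is the agent owning the free place [q]; a heavy agent owns none since
   [k - a i] is truncated. *)
Variables (S : nat) (own : 'I_S.+1 -> 'I_n).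
Hypotheses (S_eq : S.+1 = (\sum_i (k - a i))%N)
           (own_fibre : forall i, #|[set q | own q == i]| = (k - a i)%N).

Let nu g := (\sum_q u (own q) g) / S.+1%:R.
Let dl g := w g - nu g.
Let N i := \sum_(g in bundle A i) nu g.
Let D i := \sum_(g in bundle A i) dl g.

Lemma nu_le_owner g : nu g <= w g.
Proof.
rewrite ler_pdivrMr ?ltr0Sn // mulr_natr -[X in _ *+ X](card_ord S.+1) -sumr_const.
by apply: ler_sum => q _; apply: le_owner_utility A_opt _ _.
Qed.

Lemma sum_nu : \sum_g nu g = 1.
Proof.
rewrite -mulr_suml exchange_big /=.
under eq_bigr do rewrite -util_setT u_norm.
by rewrite sumr_const card_ord divff ?pnatr_eq0.
Qed.

Lemma sum_N : \sum_i N i = \sum_g nu g.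
Proof. exact: big_bundles. Qed.

Lemma agent_budget i : (a i)%:R * D i + N i <= (a i)%:R.
Proof.
have ND_le1 : N i + D i <= 1.
  rewrite -big_split (eq_bigr (u i)) => [|g]; first exact: util_le1.
  by rewrite inE => /eqP <-; rewrite /= /dl subrKC.
have N_le : N i <= (a i)%:R * N i.
  have [/cards0_eq a0 | a_gt0] := posnP (a i); first by rewrite /N a0 big_set0 mulr0.
  by rewrite ler_peMl ?sumr_ge0 // => [g _|]; rewrite ?divr_ge0 ?sumr_ge0 ?ler1n.
have := ler_wpM2l (ler0n R (a i)) ND_le1; rewrite mulr1 mulrDr; lra.
Qed.

Lemma exists_kept_bundle i : exists W : {set 'I_m},
  [/\ W \subset bundle A i, #|W| = minn k (a i)
    & (4 * b * k%:R - (a i)%:R) * D i <= 4 * b ^+ 2 * k%:R * \sum_(g in W) dl g].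
Proof.
have dl_ge0 g : 0 <= dl g by rewrite subr_ge0 nu_le_owner.
have D_ge0 : 0 <= D i by apply: sumr_ge0.
have [heavy | light] := leqP k (a i).
  have [W [WA cardW top]] := exists_top_subset dl heavy.
  exists W; split; rewrite ?cardW ?(minn_idPl heavy) //.
  by apply: amgm_slack; rewrite ?ler0n ?ltr0n ?(leq_trans k_gt0).
exists (bundle A i); split; rewrite ?(minn_idPr (ltnW light)) //.
have bkD_ge0 : 0 <= b * k%:R * D i by rewrite !mulr_ge0 // (le_trans ler01).
have aD_ge0 : 0 <= (a i)%:R * D i by rewrite mulr_ge0.
by rewrite -/(D i); have := b_ge1; nra.
Qed.

Section KeptGoods.
Variable kept : 'I_n -> {set 'I_m}.
Hypothesis kept_spec : forall i, [/\ kept i \subset bundle A i, #|kept i| = minn k (a i)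
  & (4 * b * k%:R - (a i)%:R) * D i <= 4 * b ^+ 2 * k%:R * \sum_(g in kept i) dl g].

Let moved := [set g | g \notin kept (A g)].

Lemma bundle_setD_moved i : bundle A i :\: moved = kept i.
Proof.
have [WA _ _] := kept_spec i; apply/setP => g; rewrite !inE negbK.
case: (A g =P i) => [<- | Agi]; rewrite ?andbT ?andbF //.
by apply/esym/negP => /(subsetP WA); rewrite inE => /eqP.
Qed.

Lemma card_moved_le : (#|moved| <= S.+1)%N.
Proof.
have -> : #|moved| = (\sum_i (a i - minn k (a i)))%N.
  rewrite -sum1_card -(big_bundles_cond _ A (fun _ g => g \in moved) (fun _ _ => 1%N)).
  apply: eq_bigr => i _; rewrite sum1_card.
  have [_ <- _] := kept_spec i.
  rewrite -(bundle_setD_moved i) -(cardsID moved (bundle A i)) addnK.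
  by apply: eq_card => g; rewrite unfold_in !inE.
rewrite S_eq; apply: leq_trans sum_excess_le_sum_slack.
by apply: leq_sum => i _; lia.
Qed.

Let K i := \sum_(g in kept i) dl g.

Lemma redistribution_value_eq :
  \sum_(g | g \notin moved) w g + (\sum_(g in moved) \sum_q u (own q) g) / S.+1%:R
  = \sum_i (N i + K i).
Proof.
have sum_K : \sum_i K i = \sum_(g | g \notin moved) dl g.
  rewrite -(big_bundles_cond _ A (fun _ g => g \notin moved) (fun _ g => dl g)).
  apply: eq_bigr => i _; rewrite /K -bundle_setD_moved.
  by apply: eq_bigl => g; rewrite !inE andbC.
have sum_nu_split : \sum_g nu g
    = (\sum_(g in moved) \sum_q u (own q) g) / S.+1%:R + \sum_(g | g \notin moved) nu g.
  by rewrite (bigID (mem moved)) /= [in LHS]/nu -mulr_suml.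
by rewrite big_split /= sum_N sum_K sum_nu_split /dl sumrB; ring.
Qed.

Lemma OPT_le_mul_kept : OPT_USW u <= b * max_cardinal_USW k u.
Proof.
have fibre_cap i : (#|bundle A i :\: moved| + #|[set q | own q == i]| <= k)%N.
  by rewrite bundle_setD_moved own_fibre; have [_ -> _] := kept_spec i; lia.
have LB := max_cardinal_ge_shift_average u card_moved_le fibre_cap.
apply: le_trans (ler_wpM2l (le_trans ler01 b_ge1) LB).
have OPT_eq : OPT_USW u = \sum_i (N i + D i).
  rewrite -A_opt USW_goods -(big_bundles _ A (fun _ g => w g)).
  apply: eq_bigr => i _; rewrite -big_split.
  by apply: eq_bigr => g _; rewrite /= /dl subrKC.
rewrite OPT_eq redistribution_value_eq.
apply: (ratio_bound_arith (a := fun i => (a i)%:R) (k := k%:R) (M := m%:R)).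
- by rewrite ltr0n.
- exact: lt_le_trans ltr01 b_ge1.
- exact: b_root.
- by rewrite sum_N sum_nu.
- by rewrite -natr_sum sum_card_bundles.
- exact: agent_budget.
- by move=> i; have [_ _] := kept_spec i.
Qed.

End KeptGoods.

Lemma OPT_le_mul_redistribution : OPT_USW u <= b * max_cardinal_USW k u.
Proof.
have [kept kept_spec] := fin_all_exists exists_kept_bundle.
exact: OPT_le_mul_kept kept_spec.
Qed.

End Redistribution.

Lemma OPT_le_mul_max_cardinal : OPT_USW u <= b * max_cardinal_USW k u.
Proof.
case S_eq: (\sum_i (k - a i))%N => [|S]; last first.
  have [own own_fibre] := exists_map_with_fibres (esym S_eq).
  exact: OPT_le_mul_redistribution (esym S_eq) own_fibre.
have A_card : cardinal k A.
  apply/forallP => i; rewrite -subn_eq0.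
  have := sum_excess_le_sum_slack; rewrite S_eq leqn0 sum_nat_eq0.
  by move=> /forallP /(_ i).
have USW_ge0 : 0 <= USW u A by apply: sumr_ge0 => i _; apply: sumr_ge0.
have C_ge := USW_le_max_cardinal u A_card.
have C_ge0 := le_trans USW_ge0 C_ge.
by rewrite -A_opt (le_trans C_ge) // ler_peMl.
Qed.

End OptimalVsCardinal.

Theorem lemma5 (R : rcfType) (n m k : nat)
  (u : 'I_n -> 'I_m -> R)
  (u_ge0 : forall i g, 0 <= u i g)
  (u_norm : forall i, util u i [set: 'I_m] = 1)
  (hk : (0 < k)%N) (hn : (0 < n)%N)
  (hkm : (k < m)%N) (hmkn : (m <= k * n)%N)
  (Astar : alloc n m)
  (Aopt : USW u Astar = OPT_USW u)
  (hRT : \sum_(i : 'I_n | (#|bundle Astar i| <= k)%N) util u i (bundle Astar i) < 1) :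
  let s := -1 + Num.sqrt (1 + (m%:R - 1) / k%:R) in
  OPT_USW u / max_cardinal_USW k u
    <= (1 + s) / (1 + k%:R * s ^+ 2 / (m%:R - 1)).
Proof.
cbv zeta.
have k_gt0 : (0 : R) < k%:R by rewrite ltr0n.
have m_gt1 : (1 : R) < m%:R by rewrite ltr1n (leq_ltn_trans hk hkm).
have [b_ge1 b_root ->] := half_one_plus_sqrt k_gt0 m_gt1.
apply: divr_le_of_le_mul.
- by rewrite -Aopt USW_goods sumr_ge0.
- exact: le_trans ler01 b_ge1.
- by apply: (OPT_le_mul_max_cardinal u_ge0 u_norm hk hmkn Aopt b_ge1); rewrite b_root.
Qed.
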